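(* Let $\lambda\in k$. (i) Suppose $(A,\circ,P,\omega)$ is a Rota–Baxter symplectic Leibniz algebra of weight $\lambda$. Define $\succ,\prec$ on $A$ by $\omega(x\prec y,z)=\omega(x,y\circ z+z\circ y)$ and $\omega(x\succ y,z)=-\omega(y,x\circ z)$ for all $x,y,z$ (these define a Leibniz-dendriform algebra with associated Leibniz algebra $(A,\circ)$). Then $(A,\succ,\prec,P,\omega)$ is a quadratic Rota–Baxter Leibniz-dendriform algebra of weight $\lambda$. (ii) Conversely, if $(A,\succ,\prec,P,\omega)$ is a quadratic Rota–Baxter Leibniz-dendriform algebra of weight $\lambda$, then $(A,\circ,P,\omega)$ with $\circ=\succ+\prec$ is a Rota–Baxter symplectic Leibniz algebra of weight $\lambda$.
   Context: Vector spaces are finite-dimensional over a field $k$. A Leibniz algebra is a vector space with bilinear $\circ$ such that $x\circ(y\circ z)=(x\circ y)\circ z+y\circ(x\circ z)$. A symplectic Leibniz algebra is a Leibniz algebra $(A,\circ)$ with a non-degenerate symmetric bilinear form $\omega$ such that $\omega(z,x\circ y)=-\omega(y,x\circ z)+\omega(x,y\circ z+z\circ y)$ for all $x,y,z$. A Rota–Baxter operator of weight $\lambda$ on $(A,\circ)$ is a linear $P$ with $P(x)\circ P(y)=P(P(x)\circ y+x\circ P(y)+\lambda x\circ y)$; $(A,\circ,P,\omega)$ is a Rota–Baxter symplectic Leibniz algebra of weight $\lambda$ if $(A,\circ,\omega)$ is symplectic, $P$ is a Rota–Baxter operator of weight $\lambda$ and $\omega(P(x),y)+\omega(x,P(y))+\lambda\omega(x,y)=0$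 for all $x,y$. A Leibniz-dendriform algebra is a vector space $A$ with bilinear operations $\succ,\prec$ such that, with $x\circ y:=x\succ y+x\prec y$, for all $x,y,z$: $(x\circ y)\succ z=x\succ(y\succ z)-y\succ(x\succ z)$, $y\prec(x\circ z)+(x\succ y)\prec z=x\succ(y\prec z)$, $x\prec(y\circ z)=(x\prec y)\prec z+y\succ(x\prec z)$. A quadratic Leibniz-dendriform algebra is one with a non-degenerate symmetric bilinear form $\omega$ with $\omega(x\prec y,z)=\omega(x,y\circ z+z\circ y)$ and $\omega(x\succ y,z)=-\omega(y,x\circ z)$ for all $x,y,z$. A Rota–Baxter operator of weight $\lambda$ on $(A,\succ,\prec)$ is a linear $P$ with $P(x)\succ P(y)=P(P(x)\succ y+x\succ P(y)+\lambda x\succ y)$ and $P(x)\prec P(y)=P(P(x)\prec y+x\prec P(y)+\lambda x\prec y)$. $(A,\succ,\prec,P,\omega)$ is a quadratic Rota–Baxter Leibniz-dendriform algebra of weight $\lambda$ if $(A,\succ,\prec,\omega)$ is quadratic, $P$ is a Rota–Baxter operator of weight $\lambda$, and $\omega(P(x),y)+\omega(x,P(y))+\lambda\omega(x,y)=0$ for all $x,y$. *)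

From HB Require Import structures.
From mathcomp Require Import all_boot all_order all_algebra.
Set Implicit Arguments. Unset Strict Implicit. Unset Printing Implicit Defensive.
Import GRing.Theory.
Local Open Scope ring_scope.

Section Defs.
Variables (K : fieldType) (V : vectType K).

Definition linear_map (f : V -> V) : Prop :=
  forall (a : K) (x y : V), f (a *: x + y) = a *: f x + f y.

Definition bilinear_op (m : V -> V -> V) : Prop :=
  (forall (a : K) (x y z : V), m (a *: x + y) z = a *: m x z + m y z) /\
  (forall (a : K) (x y z : V), m z (a *: x + y) = a *: m z x + m z y).

Definition bilinear_form (w : V -> V -> K) : Prop :=
  (forall (a : K) (x y z : V), w (a *: x + y) z = a * w x z + w y z) /\
  (forall (a : K) (x y z : V), w z (a *: x + y) = a * w z x + w z y).

Definition symmetric_form (w : V -> V -> K) : Prop :=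
  forall x y, w x y = w y x.

Definition nondegenerate (w : V -> V -> K) : Prop :=
  forall x, (forall y, w x y = 0) -> x = 0.

Definition leibniz_algebra (m : V -> V -> V) : Prop :=
  bilinear_op m /\
  forall x y z, m x (m y z) = m (m x y) z + m y (m x z).

Definition symplectic_leibniz (m : V -> V -> V) (w : V -> V -> K) : Prop :=
  [/\ leibniz_algebra m, bilinear_form w, symmetric_form w, nondegenerate w &
      forall x y z, w z (m x y) = - w y (m x z) + w x (m y z + m z y)].

Definition rota_baxter_op (m : V -> V -> V) (P : V -> V) (lam : K) : Prop :=
  linear_map P /\
  forall x y, m (P x) (P y) = P (m (P x) y + m x (P y) + lam *: m x y).

Definition compat_RB_form (P : V -> V) (w : V -> V -> K) (lam : K) : Prop :=
  forall x y, w (P x) y + w x (P y) + lam * w x y = 0.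

Definition RB_symplectic_leibniz (m : V -> V -> V) (P : V -> V)
    (w : V -> V -> K) (lam : K) : Prop :=
  [/\ symplectic_leibniz m w, rota_baxter_op m P lam & compat_RB_form P w lam].

Definition ld_circ (sc pr : V -> V -> V) : V -> V -> V :=
  fun x y => sc x y + pr x y.

Definition leibniz_dendriform (sc pr : V -> V -> V) : Prop :=
  let c := ld_circ sc pr in
  [/\ bilinear_op sc /\ bilinear_op pr,
      (forall x y z, sc (c x y) z = sc x (sc y z) - sc y (sc x z)),
      (forall x y z, pr y (c x z) + pr (sc x y) z = sc x (pr y z)) &
      (forall x y z, pr x (c y z) = pr (pr x y) z + sc y (pr x z))].

Definition quadratic_LD (sc pr : V -> V -> V) (w : V -> V -> K) : Prop :=
  let c := ld_circ sc pr in
  [/\ leibniz_dendriform sc pr, bilinear_form w, symmetric_form w /\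
      nondegenerate w,
      (forall x y z, w (pr x y) z = w x (c y z + c z y)) &
      (forall x y z, w (sc x y) z = - w y (c x z))].

Definition rota_baxter_LD (sc pr : V -> V -> V) (P : V -> V) (lam : K) : Prop :=
  [/\ linear_map P,
      (forall x y, sc (P x) (P y) = P (sc (P x) y + sc x (P y) + lam *: sc x y)) &
      (forall x y, pr (P x) (P y) = P (pr (P x) y + pr x (P y) + lam *: pr x y))].

Definition quadratic_RB_LD (sc pr : V -> V -> V) (P : V -> V)
    (w : V -> V -> K) (lam : K) : Prop :=
  [/\ quadratic_LD sc pr w, rota_baxter_LD sc pr P lam & compat_RB_form P w lam].

End Defs.

From Pilot Require Import Defs.
From HB Require Import structures.
From mathcomp Require Import all_boot all_order all_algebra.
From mathcomp Require Import ring.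
Import GRing.Theory.
Local Open Scope ring_scope.
Set Implicit Arguments.
Unset Strict Implicit.

(* With respect to the non-degenerate form w, x ≻ _ is minus the transpose of
   left multiplication by x, and _ ≺ y is the transpose of the symmetrised
   product y ∘ _ + _ ∘ y, so every identity about ≻ and ≺ can be tested
   against w and becomes an identity about ∘.  The symplectic identity says
   exactly that ≻ + ≺ = ∘; the dendriform axioms become the Leibniz identity,
   the fact that left multiplications are derivations of the symmetrised
   product, and the fact that symmetrised products annihilate from the left;
   the Rota-Baxter identities transfer because the compatibility condition
   says that the transpose of P is -P - λ.  Conversely, the Leibniz identity
   of ∘ = ≻ + ≺ is the sum of the three dendriform axioms, the Rota-Baxter
   identity is additive in the product, and the symplectic identity is the
   sum of the two quadratic conditions. *)

Section LinearFunction.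
Variables (K : fieldType) (U W : lmodType K) (f : U -> W).
Hypothesis f_lin : forall a x y, f (a *: x + y) = a *: f x + f y.

Lemma lin_fun0 : f 0 = 0.
Proof. by apply: (addrI (f 0)); rewrite addr0 -{1}(scale1r (f 0)) -f_lin scale1r addr0. Qed.

Lemma lin_funD x y : f (x + y) = f x + f y.
Proof. by rewrite -[x]scale1r f_lin !scale1r. Qed.

Lemma lin_funZ a x : f (a *: x) = a *: f x.
Proof. by rewrite -[a *: x]addr0 f_lin lin_fun0 addr0. Qed.

Lemma lin_funN x : f (- x) = - f x.
Proof. by rewrite -scaleN1r lin_funZ scaleN1r. Qed.

End LinearFunction.

Section VectorSpace.
Variables (K : fieldType) (V : vectType K).
Implicit Types (P : V -> V) (m sc pr : V -> V -> V) (w : V -> V -> K).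

Section LinearMap.
Variables (P : V -> V) (P_lin : linear_map P).
Lemma linear_mapD x y : P (x + y) = P x + P y. Proof. exact: lin_funD. Qed.
Lemma linear_mapZ a x : P (a *: x) = a *: P x. Proof. exact: lin_funZ. Qed.
End LinearMap.

Section BilinearOp.
Variables (m : V -> V -> V) (m_bil : bilinear_op m).
Let m_linl z : forall a x y, m (a *: x + y) z = a *: m x z + m y z.
Proof. by move=> a x y; apply: m_bil.1. Qed.
Let m_linr z : forall a x y, m z (a *: x + y) = a *: m z x + m z y.
Proof. by move=> a x y; apply: m_bil.2. Qed.
Lemma bilinear_opDl x y z : m (x + y) z = m x z + m y z. Proof. exact: (lin_funD (m_linl z)). Qed.
Lemma bilinear_opDr x y z : m z (x + y) = m z x + m z y. Proof. exact: (lin_funD (m_linr z)). Qed.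
Lemma bilinear_opZl a x z : m (a *: x) z = a *: m x z. Proof. exact: (lin_funZ (m_linl z)). Qed.
Lemma bilinear_opZr a x z : m z (a *: x) = a *: m z x. Proof. exact: (lin_funZ (m_linr z)). Qed.
End BilinearOp.

Lemma bilinear_opD m1 m2 :
  bilinear_op m1 -> bilinear_op m2 -> bilinear_op (fun x y => m1 x y + m2 x y).
Proof.
move=> [m1l m1r] [m2l m2r].
by split=> a x y z; rewrite ?(m1l, m1r, m2l, m2r) scalerDr addrACA.
Qed.

Section BilinearForm.
Variables (w : V -> V -> K) (w_bil : bilinear_form w).
(* A linear functional into [K] is a linear map into the regular module [K^o]. *)
Let w_linl z : forall a x y, (fun v => w v z : K^o) (a *: x + y) = a *: (w x z : K^o) + w y z.
Proof. by move=> a x y; apply: w_bil.1. Qed.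
Let w_linr z : forall a x y, (fun v => w z v : K^o) (a *: x + y) = a *: (w z x : K^o) + w z y.
Proof. by move=> a x y; apply: w_bil.2. Qed.
Lemma bilinear_formDl x y z : w (x + y) z = w x z + w y z. Proof. exact: (lin_funD (w_linl z)). Qed.
Lemma bilinear_formDr x y z : w z (x + y) = w z x + w z y. Proof. exact: (lin_funD (w_linr z)). Qed.
Lemma bilinear_formNl x z : w (- x) z = - w x z. Proof. exact: (lin_funN (w_linl z)). Qed.
Lemma bilinear_formNr x z : w z (- x) = - w z x. Proof. exact: (lin_funN (w_linr z)). Qed.
Lemma bilinear_formZl a x z : w (a *: x) z = a * w x z. Proof. exact: (lin_funZ (w_linl z)). Qed.
Lemma bilinear_formZr a x z : w z (a *: x) = a * w z x. Proof. exact: (lin_funZ (w_linr z)). Qed.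

Lemma nondegenerate_ext : Defs.nondegenerate w ->
  forall a b, (forall u, w a u = w b u) -> a = b.
Proof.
move=> w_nd a b eq_ab; apply/eqP; rewrite -subr_eq0; apply/eqP; apply: w_nd => u.
by rewrite bilinear_formDl bilinear_formNl eq_ab subrr.
Qed.

End BilinearForm.

Definition rota_baxter_identity m P (lam : K) : Prop :=
  forall x y, m (P x) (P y) = P (m (P x) y + m x (P y) + lam *: m x y).

Section RotaBaxter.
Variables (P : V -> V) (lam : K) (P_lin : linear_map P).

Lemma rota_baxter_identityD m1 m2 :
  rota_baxter_identity m1 P lam -> rota_baxter_identity m2 P lam ->
  rota_baxter_identity (fun x y => m1 x y + m2 x y) P lam.
Proof.
move=> rb1 rb2 x y; rewrite rb1 rb2 -linear_mapD //; congr P.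
by rewrite scalerDr addrACA; congr (_ + _); exact: addrACA.
Qed.

Lemma rota_baxter_identity_rev m :
  rota_baxter_identity m P lam -> rota_baxter_identity (fun x y => m y x) P lam.
Proof. by move=> rb x y; rewrite rb [m (P y) x + _]addrC. Qed.

End RotaBaxter.

Lemma compat_RB_formE P w lam : compat_RB_form P w lam ->
  forall a b, w (P a) b = - w a (P b) - lam * w a b.
Proof. by move=> compat a b; rewrite -[LHS]subr0 -(compat a b); ring. Qed.

Section LeibnizAlgebra.
Variables (m : V -> V -> V) (m_leib : leibniz_algebra m).

Lemma leibniz_mulA x y z : m (m x y) z = m x (m y z) - m y (m x z).
Proof. by rewrite m_leib.2 addrK. Qed.

Lemma leibniz_mul_sym0 x y z : m (m x y + m y x) z = 0.
Proof. by rewrite (bilinear_opDl m_leib.1) !leibniz_mulA subrKA subrr. Qed.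

(* Left multiplications are derivations of m, hence of its symmetrisation. *)
Lemma leibniz_mul_sym x y z :
  m x (m y z + m z y) = (m (m x y) z + m z (m x y)) + (m y (m x z) + m (m x z) y).
Proof.
rewrite (bilinear_opDr m_leib.1) (m_leib.2 x y z) (m_leib.2 x z y).
by rewrite [m (m x z) y + _]addrC addrACA.
Qed.

End LeibnizAlgebra.

Lemma leibniz_dendriform_leibniz sc pr :
  leibniz_dendriform sc pr -> leibniz_algebra (ld_circ sc pr).
Proof.
move=> [[sc_bil pr_bil] sc_circ pr_circl pr_circr]; split; first exact: bilinear_opD.
move=> x y z; rewrite /ld_circ in sc_circ pr_circl pr_circr *.
rewrite pr_circr sc_circ (bilinear_opDr sc_bil) -pr_circl.
rewrite (bilinear_opDl pr_bil) (bilinear_opDr sc_bil).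
rewrite [RHS]addrAC -[sc y _ + _ + _]addrA subrKA -!addrA; congr (_ + _).
by rewrite [RHS]addrCA [sc y (pr x z) + _]addrC -addrA.
Qed.

Section Transposition.
Variables (w : V -> V -> K) (w_bil : bilinear_form w) (w_nd : Defs.nondegenerate w).
Let w_ext := nondegenerate_ext w_bil w_nd.
Let wE := (bilinear_formDl w_bil, bilinear_formDr w_bil, bilinear_formNl w_bil,
           bilinear_formNr w_bil, bilinear_formZl w_bil, bilinear_formZr w_bil).
Let wEl := (bilinear_formDl w_bil, bilinear_formNl w_bil, bilinear_formZl w_bil).

Section RotaBaxterTransposed.
Variables (P : V -> V) (lam : K) (P_lin : linear_map P).
Hypothesis compat : compat_RB_form P w lam.
Variables (n q : V -> V -> V).
Hypothesis n_rb : rota_baxter_identity n P lam.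
Let PE := (linear_mapD P_lin, linear_mapZ P_lin).
Let wPE := compat_RB_formE compat.

Lemma rota_baxter_transposedl :
  (forall x y z, w (q x y) z = w x (n y z)) -> rota_baxter_identity q P lam.
Proof.
move=> q_def x y; apply: w_ext => u.
by rewrite !(wEl, q_def, wPE) n_rb !(PE, wE); ring.
Qed.

Lemma rota_baxter_transposedr :
  (forall x y z, w (q x y) z = - w y (n x z)) -> rota_baxter_identity q P lam.
Proof.
move=> q_def x y; apply: w_ext => u.
by rewrite !(wEl, q_def, wPE) n_rb !(PE, wE); ring.
Qed.

End RotaBaxterTransposed.

Section LeibnizTransposed.
Variables (m sc pr : V -> V -> V).
Hypothesis pr_def : forall x y z, w (pr x y) z = w x (m y z + m z y).
Hypothesis sc_def : forall x y z, w (sc x y) z = - w y (m x z).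

Lemma form_ld_circ x y z :
  w (ld_circ sc pr x y) z = - w y (m x z) + w x (m y z + m z y).
Proof. by rewrite bilinear_formDl // sc_def pr_def. Qed.

Lemma ld_circ_transposed : Defs.symmetric_form w ->
  (forall x y z, w z (m x y) = - w y (m x z) + w x (m y z + m z y)) ->
  forall x y, ld_circ sc pr x y = m x y.
Proof.
by move=> w_sym m_symp x y; apply: w_ext => u; rewrite form_ld_circ -m_symp w_sym.
Qed.

Lemma bilinear_op_transposed : bilinear_op m -> bilinear_op sc /\ bilinear_op pr.
Proof.
move=> m_bil; have mE := (bilinear_opDl m_bil, bilinear_opDr m_bil,
  bilinear_opZl m_bil, bilinear_opZr m_bil).
by split; split=> a x y z; apply: w_ext => u; rewrite !(wE, mE, sc_def, pr_def); ring.
Qed.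

Lemma leibniz_dendriform_transposed : leibniz_algebra m ->
  (forall x y, ld_circ sc pr x y = m x y) -> leibniz_dendriform sc pr.
Proof.
move=> m_leib circ_m; have [sc_bil pr_bil] := bilinear_op_transposed m_leib.1.
split=> // x y z; rewrite !circ_m; apply: w_ext => u; rewrite !(wEl, sc_def, pr_def).
- by rewrite leibniz_mulA // !wE; ring.
- by rewrite leibniz_mul_sym // !wE; ring.
- by rewrite leibniz_mul_sym0 // leibniz_mul_sym // addr0 !wE; ring.
Qed.

Lemma rota_baxter_transposed P lam : linear_map P -> compat_RB_form P w lam ->
  rota_baxter_identity m P lam ->
  rota_baxter_identity sc P lam /\ rota_baxter_identity pr P lam.
Proof.
move=> P_lin compat m_rb; split; first exact: rota_baxter_transposedr sc_def.
apply: (rota_baxter_transposedl P_lin compat (n := fun y z => m y z + m z y)) pr_def.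
exact: rota_baxter_identityD (rota_baxter_identity_rev _).
Qed.

End LeibnizTransposed.
End Transposition.

End VectorSpace.

Theorem mainTheorem14 (K : fieldType) (V : vectType K) (lam : K) :
  (forall (m : V -> V -> V) (P : V -> V) (w : V -> V -> K)
          (sc pr : V -> V -> V),
      RB_symplectic_leibniz m P w lam ->
      (forall x y z, w (pr x y) z = w x (m y z + m z y)) ->
      (forall x y z, w (sc x y) z = - w y (m x z)) ->
      (forall x y, ld_circ sc pr x y = m x y) /\
      quadratic_RB_LD sc pr P w lam) /\
  (forall (sc pr : V -> V -> V) (P : V -> V) (w : V -> V -> K),
      quadratic_RB_LD sc pr P w lam ->
      RB_symplectic_leibniz (ld_circ sc pr) P w lam).
Proof.
split.
- move=> m P w sc pr [[m_leib w_bil w_sym w_nd m_symp] [P_lin m_rb] compat] pr_def sc_def.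
  have circ_m := ld_circ_transposed w_bil w_nd pr_def sc_def w_sym m_symp.
  have [sc_rb pr_rb] := rota_baxter_transposed w_bil w_nd pr_def sc_def P_lin compat m_rb.
  split=> //; split=> //; split=> //.
  + exact: (leibniz_dendriform_transposed w_bil w_nd pr_def sc_def m_leib circ_m).
  + by move=> x y z; rewrite !circ_m.
  + by move=> x y z; rewrite circ_m.
- move=> sc pr P w [[dend w_bil [w_sym w_nd] pr_def sc_def] [P_lin sc_rb pr_rb] compat].
  split=> //; split=> //.
  + exact: leibniz_dendriform_leibniz.
  + by move=> x y z; rewrite w_sym (form_ld_circ w_bil pr_def sc_def).
  + exact: rota_baxter_identityD.
Qed.
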